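(* Let $h\ge0$, let $m\in U$ and let $(u_{\alpha,\beta})_{\alpha+\beta\le h}$ be an element of $R_h$ at $m$. Put $v^{(k)}:=u_{0,k}$ for $0\le k\le h$. Then the whole element is determined by $v^{(0)},\dots,v^{(h)}$; more precisely, for all $\alpha+\beta\le h$, $$u_{\alpha,\beta}=\sum_{k=0}^{\alpha+\beta}E^k_{\alpha,\beta}\,v^{(k)},$$ where the $(d-2)\times(d-2)$ matrices $E^k_{\alpha,\beta}$ depend only on $M$ and its partial derivatives and are determined by $E^k_{0,k}=\mathrm{Id}_{d-2}$, $E^{h'}_{0,k}=0$ for $h'<k$, the convention $E^{h'}_{\gamma,\delta}=0$ if $h'>\gamma+\delta$, and the recursion (on $\alpha+\beta$, then on $\alpha$ for fixed $\alpha+\beta$) $$E^{h'}_{\alpha+1,\beta}=-(J_0I^0)\,E^{h'}_{\alpha,\beta+1}+\sum_{\gamma=0}^{\alpha}\sum_{\delta=0}^{\beta}(J_0M^{\gamma,\delta}_{\alpha,\beta})\,E^{h'}_{\gamma,\delta}.$$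
   Context: Let $d\ge 3$, $U\subset\mathbb{C}^2$ open with coordinates $(x,y)$, and let $M$ be the $(d-1)\times(d-2)$ matrix of holomorphic functions on $U$ defined as follows. Let $F(x,y,p)=\sum_{i=0}^d a_i(x,y)p^{d-i}$, $a_i$ holomorphic, $a_0\equiv1$, with $F=\prod_{i=1}^d(p-p_i(x,y))$, the $p_i$ holomorphic and pairwise distinct at every point. A polynomial $P=\sum_{i=0}^kg_ip^i$ is identified with $(g_0,\dots,g_k)^T$; $M(P)$ is the $(h+k+1)\times(h+1)$ multiplication matrix with $0$-based entry $(i,j)$ equal to $g_{i-j}$ if $0\le i-j\le k$, else $0$. Put $K=F'_x+pF'_y$, $H=KF''_{pp}-K'_pF'_p$, $L=KF'_p$; take $M(F)$ of size $(3d-3)\times(2d-3)$, $M((F'_p)^2)$ of size $(3d-3)\times(d-1)$, $M(L),M(H)$ of size $(3d-3)\times(d-2)$. For a matrix $X$ with $3d-3$ rows, $X^+$ (resp. $X^-$) is the submatrix of its first $d$ (resp. last $2d-3$) rows. $N$ is the $(d-2)\times(d-2)$ matrix with only nonzero entries $N_{j,j+1}=j$ ($1\le j\le d-3$, 1-based). $B=M^+((F'_p)^2)-M^+(F)(M^-(F))^{-1}M^-((F'_p)^2)$ (rank $d-1$), $E=(M^+(H)-M^+(L)N)-M^+(F)(M^-(F))^{-1}(M^-(H)-M^-(L)N)$, $T$ a left inverse of $B$, and $M=-TE$. $I_0$ (resp. $I^0$) is the $(d-1)\times(d-2)$ matrix formed by $\mathrm{Id}_{d-2}$ followed by (resp.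 preceded by) a zero row. $J_0$ is the $(d-2)\times(d-1)$ matrix obtained by adding a column of zeros to the right of $\mathrm{Id}_{d-2}$. $M'_{a,b}$ denotes $\partial^{a+b}M/\partial x^a\partial y^b$ and $M^{\gamma,\delta}_{\alpha,\beta}:=\binom{\alpha}{\gamma}\binom{\beta}{\delta}M'_{\alpha-\gamma,\beta-\delta}$. $R_h$ (formal abelian relations of order $h$): its fiber at $m\in U$ is the set of families $(u_{\alpha,\beta})_{\alpha+\beta\le h}$ of vectors in $\mathbb{C}^{d-2}$ such that for all $\alpha,\beta\ge0$ with $\alpha+\beta\le h-1$: $$I_0u_{\alpha+1,\beta}+I^0u_{\alpha,\beta+1}=\sum_{\gamma=0}^\alpha\sum_{\delta=0}^\beta M^{\gamma,\delta}_{\alpha,\beta}(m)\,u_{\gamma,\delta}$$ (the equations obtained by differentiating $\alpha$ times in $x$ and $\beta$ times in $y$ the system $I_0r'_x+I^0r'_y=Mr$). *)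

From HB Require Import structures.
From mathcomp Require Import all_boot all_order all_algebra.
From mathcomp Require Import complex.
From mathcomp Require Import all_classical all_reals all_analysis.
Set Implicit Arguments. Unset Strict Implicit. Unset Printing Implicit Defensive.
Import Order.TTheory GRing.Theory Num.Theory.
Import numFieldNormedType.Exports.
Local Open Scope ring_scope.

(* The complex numbers over R, seen as a numClosedFieldType so that the
   generic normed-module structure (numFieldNormedType) applies. *)
Definition Cplx (R : realType) : numClosedFieldType := R[i].

Section Defs.
Variable R : realType.
Local Notation C := (Cplx R).

Definition pdx (f : C -> C -> C) : C -> C -> C :=
  fun x y => derive1 (fun t : C => f t y) x.
Definition pdy (f : C -> C -> C) : C -> C -> C :=
  fun x y => derive1 (fun t : C => f x t) y.

Definition pder (a b : nat) (f : C -> C -> C) : C -> C -> C :=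
  iter a pdx (iter b pdy f).

Variable n : nat. (* n = d - 2, so d - 1 = n.+1 *)

Definition Mder (M : C -> C -> 'M[C]_(n.+1, n)) (a b : nat) (x0 y0 : C)
  : 'M[C]_(n.+1, n) :=
  \matrix_(i, j) pder a b (fun x y => M x y i j) x0 y0.

Definition Mbin (M : C -> C -> 'M[C]_(n.+1, n)) (x0 y0 : C)
  (al be ga de : nat) : 'M[C]_(n.+1, n) :=
  ('C(al, ga) * 'C(be, de))%:R *: Mder M (al - ga) (be - de) x0 y0.

Definition Ilow0 : 'M[C]_(n.+1, n) := \matrix_(i, j) ((i : nat) == j)%:R.
Definition Iup0 : 'M[C]_(n.+1, n) := \matrix_(i, j) ((i : nat) == j.+1)%:R.
Definition J0 : 'M[C]_(n, n.+1) := \matrix_(i, j) ((i : nat) == j)%:R.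

(* Fiber at m = (x0, y0) of R_h: formal abelian relations of order h. *)
Definition in_Rh (M : C -> C -> 'M[C]_(n.+1, n)) (h : nat) (x0 y0 : C)
  (u : nat -> nat -> 'cV[C]_n) : Prop :=
  forall al be : nat, (al + be < h)%N ->
    Ilow0 *m u al.+1 be + Iup0 *m u al be.+1 =
    \sum_(ga < al.+1) \sum_(de < be.+1) Mbin M x0 y0 al be ga de *m u ga de.

(* Table of E^{h'}_{gamma,delta} for gamma <= a, built by the recursion. *)
Fixpoint Etab (M : C -> C -> 'M[C]_(n.+1, n)) (x0 y0 : C) (h' : nat) (a : nat)
  : nat -> nat -> 'M[C]_n :=
  match a with
  | 0 => fun _ de => ((h' == de)%N)%:R%:M
  | a'.+1 => let T := Etab M x0 y0 h' a' in
      fun ga be =>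
        if (ga <= a')%N then T ga be
        else if (a'.+1 + be < h')%N then 0
        else - (J0 *m Iup0) *m T a' be.+1
             + \sum_(g < a'.+1) \sum_(de < be.+1)
                  (J0 *m Mbin M x0 y0 a' be g de) *m T g de
  end.

Definition Emat (M : C -> C -> 'M[C]_(n.+1, n)) (x0 y0 : C) (h' al be : nat)
  : 'M[C]_n :=
  if (al + be < h')%N then 0 else Etab M x0 y0 h' al al be.

End Defs.

From HB Require Import structures.
From mathcomp Require Import all_boot all_order all_algebra.
From mathcomp Require Import complex.
From mathcomp Require Import all_classical all_reals all_analysis.
Import numFieldNormedType.Exports.
Import GRing.Theory.
Set Implicit Arguments. Unset Strict Implicit.
Local Open Scope ring_scope.
Local Open Scope classical_set_scope.

(* Since J0 is a left inverse of I_0, multiplying the relation of index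
   (al, be) by J0 expresses u_{al+1,be} through u_{al,be+1} and the u_{ga,de}
   with ga <= al, de <= be; the matrices E^k_{al,be} satisfy exactly the same
   recursion, with E^k_{0,be} = [k == be], so the formula follows by strong
   induction on al. *)

Section Emat.
Variables (R : realType) (n : nat) (M : Cplx R -> Cplx R -> 'M[Cplx R]_(n.+1, n)).
Variables (x0 y0 : Cplx R).

Local Notation C := (Cplx R).
Local Notation E := (Emat M x0 y0).
Local Notation Mb := (Mbin M x0 y0).

Lemma Etab_stable h' a ga be : (ga <= a)%N ->
  Etab M x0 y0 h' a ga be = Etab M x0 y0 h' ga ga be.
Proof.
elim: a => [|a IHa]; first by rewrite leqn0 => /eqP ->.
rewrite leq_eqVlt => /orP [/eqP -> //|]; rewrite ltnS => le_ga_a.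
by rewrite /= le_ga_a IHa.
Qed.

Lemma Emat_Etab h' al be : E h' al be = Etab M x0 y0 h' al al be.
Proof.
rewrite /Emat; case: ifP => // lt_h'; case: al lt_h' => [|a] /= lt_h'.
  by rewrite eq_sym ltn_eqF // raddf0.
by rewrite ltnn lt_h'.
Qed.

Lemma Emat_eq0 h' al be : (al + be < h')%N -> E h' al be = 0.
Proof. by rewrite /Emat => ->. Qed.

Lemma Emat0l h' be : E h' 0 be = (h' == be)%:R%:M.
Proof. by rewrite Emat_Etab. Qed.

Lemma Emat_succl h' al be :
  E h' al.+1 be = - (J0 R n *m Iup0 R n) *m E h' al be.+1
    + \sum_(ga < al.+1) \sum_(de < be.+1) (J0 R n *m Mb al be ga de) *m E h' ga de.
Proof.
case: (ltnP (al.+1 + be) h') => [lt_h'|le_h'].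
  rewrite Emat_eq0 // Emat_eq0 ?addnS // mulmx0 add0r.
  rewrite big1 // => ga _; rewrite big1 // => de _.
  rewrite Emat_eq0 ?mulmx0 //; apply: leq_ltn_trans lt_h'.
  by apply: leq_add; [exact: ltnW | rewrite -ltnS].
rewrite Emat_Etab /= ltnn ltnNge le_h' /= -Emat_Etab; congr (_ + _).
apply: eq_bigr => ga _; apply: eq_bigr => de _.
by rewrite Etab_stable -?Emat_Etab // -ltnS.
Qed.

Lemma J0_mulIlow0 : J0 R n *m Ilow0 R n = 1%:M.
Proof.
apply/matrixP => i j; rewrite !mxE (bigD1 (widen_ord (leqnSn n) i)) //=.
rewrite !mxE eqxx mul1r big1 ?addr0 // => k /eqP ne_ki; rewrite !mxE.
by case: eqP => [eq_ik|]; [case: ne_ki; apply: val_inj | rewrite mul0r].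
Qed.

Lemma in_Rh_succl h (u : nat -> nat -> 'cV[C]_n) al be :
  in_Rh M h x0 y0 u -> (al + be < h)%N ->
  u al.+1 be = - (J0 R n *m Iup0 R n) *m u al be.+1
    + \sum_(ga < al.+1) \sum_(de < be.+1) (J0 R n *m Mb al be ga de) *m u ga de.
Proof.
move=> hu lt_h; move/(congr1 (fun v => v - Iup0 R n *m u al be.+1)): (hu _ _ lt_h).
rewrite addrK => rel; rewrite -[u _ _]mul1mx -J0_mulIlow0 -mulmxA rel.
rewrite mulmxDr addrC mulmxN mulNmx mulmxA; congr (_ + _).
rewrite mulmx_sumr; apply: eq_bigr => ga _; rewrite mulmx_sumr.
by apply: eq_bigr => de _; rewrite mulmxA.
Qed.

Lemma in_Rh_Emat h (u : nat -> nat -> 'cV[C]_n) : in_Rh M h x0 y0 u ->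
  forall al be, (al + be <= h)%N ->
  u al be = \sum_(k < h.+1) E k al be *m u 0%N k.
Proof.
move=> hu al; elim: al {-2}al (leqnn al) => [|a IHa] al.
  rewrite leqn0 => /eqP -> be /= le_be_h.
  rewrite (bigD1 (Ordinal (le_be_h : (be < h.+1)%N))) //= Emat0l eqxx mul1mx.
  rewrite big1 ?addr0 // => k ne_k_be; rewrite Emat0l mul_scalar_mx.
  suff -> : (k == be :> nat) = false by rewrite scale0r.
  by apply: contraNF ne_k_be => /eqP eq_k_be; apply/eqP/val_inj.
rewrite leq_eqVlt => /orP [/eqP ->|]; last by rewrite ltnS; apply: IHa.
move=> be le_h; have lt_h : (a + be < h)%N by rewrite -addSn.
rewrite (in_Rh_succl hu lt_h) (IHa a) ?addnS //.
under [RHS]eq_bigr => k _ do rewrite Emat_succl mulmxDl mulmx_suml.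
rewrite big_split /=; congr (_ + _).
  by rewrite mulmx_sumr; apply: eq_bigr => k _; rewrite mulmxA.
rewrite [RHS]exchange_big; apply: eq_bigr => ga _.
under [RHS]eq_bigr => k _ do rewrite mulmx_suml.
rewrite [RHS]exchange_big; apply: eq_bigr => de _.
have le_ga_a : (ga <= a)%N by rewrite -ltnS.
have le_de_be : (de <= be)%N by rewrite -ltnS.
rewrite (IHa ga) //; last by apply: leq_trans (ltnW lt_h); apply: leq_add.
by rewrite mulmx_sumr; apply: eq_bigr => k _; rewrite !mulmxA.
Qed.

End Emat.

(* d = n.+2, so d >= 3 iff n >= 1; m = (x0, y0). *)
Theorem theorem2 (R : realType) (n : nat) (hn : (1 <= n)%N)
  (U : set (Cplx R * Cplx R)) (hU : open U)
  (M : Cplx R -> Cplx R -> 'M[Cplx R]_(n.+1, n))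
  (h : nat) (x0 y0 : Cplx R) (hm : U (x0, y0))
  (u : nat -> nat -> 'cV[Cplx R]_n) (hu : in_Rh M h x0 y0 u) :
  forall al be : nat, (al + be <= h)%N ->
    u al be = \sum_(k < (al + be).+1) Emat M x0 y0 k al be *m u 0%N k.
Proof.
(* Only the relations at m enter. *)
move=> al be le_h; rewrite (in_Rh_Emat hu le_h).
rewrite (big_ord_widen h.+1 (fun k => Emat M x0 y0 k al be *m u 0%N k) (le_h : (al + be).+1 <= h.+1)%N).
rewrite [RHS]big_mkcond; apply: eq_bigr => k _.
by case: ltnP => // lt_k; rewrite Emat_eq0 ?mul0mx.
Qed.
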